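(* Let $c_1<0$, $c_2,c_3\in\mathbb{R}$ and define $p(a,x)=c_1a+c_2x+c_3$ for $a\in\{0,1\}$, $x\in\mathbb{R}$. Consider two patient classes $i=1,2$: in class $i$ the feature $x$ is distributed as $\mathcal N(\mu_i,\sigma_i^2)$ with density $f_i$, and for weeks $h=1,\dots,4$ there are numbers $\alpha_i^h$ (the proportion of class-$i$ readmissions occurring in week $h$) such that the class-$i$ week-$h$ readmission risk is $p_i^h(a,x)=\alpha_i^h\,p(a,x)$. (i) For each $i$, $p_i^h(a,x)=c^h_{1,i}a+c^h_{2,i}x+c^h_{3,i}$ with $c^h_{j,i}=\alpha_i^hc_j$, $j=1,2,3$. (ii) Let the population be a mixture of the two classes with probabilities $q_1,q_2\in(0,1)$, $q_1+q_2=1$, and define the mixture week-$h$ risk $p^h(a,x)=\sum_{i=1}^2\frac{q_if_i(x)}{q_1f_1(x)+q_2f_2(x)}\,p_i^h(a,x)$. If $\alpha_1^h\neq\alpha_2^h$ and the feature distributions of the two classes are different, then $p^h(a,x)$ is not a linear (affine) function of $(a,x)$. *)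

From Stdlib Require Export Reals.
Open Scope R_scope.

Definition normal_pdf (mu sigma x : R) : R :=
  exp (- (x - mu) ^ 2 / (2 * sigma ^ 2)) / (sigma * sqrt (2 * PI)).

Definition base_risk (c1 c2 c3 a x : R) : R := c1 * a + c2 * x + c3.

Definition class_risk (alpha : nat -> R) (h : nat) (c1 c2 c3 a x : R) : R :=
  alpha h * base_risk c1 c2 c3 a x.

Definition mixture_risk (q1 q2 mu1 sigma1 mu2 sigma2 : R)
    (alpha1 alpha2 : nat -> R) (h : nat) (c1 c2 c3 a x : R) : R :=
  let f1 := normal_pdf mu1 sigma1 x in
  let f2 := normal_pdf mu2 sigma2 x in
  q1 * f1 / (q1 * f1 + q2 * f2) * class_risk alpha1 h c1 c2 c3 a x
  + q2 * f2 / (q1 * f1 + q2 * f2) * class_risk alpha2 h c1 c2 c3 a x.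

(** If the mixture risk were affine, its treatment effect [p^h(1,x) - p^h(0,x)]
    would be a constant. But that effect is the average of the two distinct class
    effects [alpha_i^h c1] weighted by [q_i f_i(x)], so the weights, hence the two
    normal densities, must be proportional. Taking logarithms, proportionality says
    that [(x-mu1)^2/(2 sigma1^2) - (x-mu2)^2/(2 sigma2^2)] is constant in [x],
    which forces equal variances and then equal means. *)

From Stdlib Require Import Reals Lra Psatz.
Open Scope R_scope.

Lemma normal_pdf_norm_const_pos sigma : 0 < sigma -> 0 < sigma * sqrt (2 * PI).
Proof.
  intros hs. apply Rmult_lt_0_compat; [exact hs|].
  apply sqrt_lt_R0. pose proof PI_RGT_0. lra.
Qed.

Lemma normal_pdf_pos mu sigma x : 0 < sigma -> 0 < normal_pdf mu sigma x.
Proof.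
  intros hs. unfold normal_pdf.
  apply Rdiv_lt_0_compat; [apply exp_pos | now apply normal_pdf_norm_const_pos].
Qed.

Lemma ln_normal_pdf mu sigma x : 0 < sigma ->
  ln (normal_pdf mu sigma x)
  = - (x - mu) ^ 2 / (2 * sigma ^ 2) - ln (sigma * sqrt (2 * PI)).
Proof.
  intros hs. unfold normal_pdf, Rdiv.
  pose proof (normal_pdf_norm_const_pos sigma hs) as hnorm.
  rewrite ln_mult, ln_exp, ln_Rinv
    by (apply exp_pos || apply Rinv_0_lt_compat || idtac; exact hnorm).
  ring.
Qed.

Lemma shifted_squares_identity (P Q m1 m2 C1 C2 : R) :
  (forall x, P * (x - m1) ^ 2 + C1 = Q * (x - m2) ^ 2 + C2) ->
  P = Q /\ P * m1 = Q * m2.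
Proof.
  intros H.
  pose proof (H 0) as H0. pose proof (H 1) as H1. pose proof (H (-1)) as Hm1.
  split; nra.
Qed.

Lemma normal_pdf_proportional mu1 sigma1 mu2 sigma2 K :
  0 < sigma1 -> 0 < sigma2 ->
  (forall x, normal_pdf mu1 sigma1 x = K * normal_pdf mu2 sigma2 x) ->
  mu1 = mu2 /\ sigma1 = sigma2.
Proof.
  intros hs1 hs2 HK.
  assert (hKpos : 0 < K).
  { pose proof (normal_pdf_pos mu1 sigma1 0 hs1) as p1.
    pose proof (normal_pdf_pos mu2 sigma2 0 hs2) as p2.
    rewrite HK in p1. nra. }
  assert (hlog : forall x,
    / (2 * sigma2 ^ 2) * (x - mu2) ^ 2 + ln (sigma2 * sqrt (2 * PI))
    = / (2 * sigma1 ^ 2) * (x - mu1) ^ 2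
      + (ln K + ln (sigma1 * sqrt (2 * PI)))).
  { intros x.
    assert (E := f_equal ln (HK x)).
    rewrite ln_mult in E by (exact hKpos || apply normal_pdf_pos, hs2).
    rewrite !ln_normal_pdf in E by assumption.
    unfold Rdiv in E. lra. }
  destruct (shifted_squares_identity _ _ _ _ _ _ hlog) as [hvar hmean].
  assert (hinv : 0 < / (2 * sigma2 ^ 2)) by (apply Rinv_0_lt_compat; nra).
  assert (hsq : sigma1 ^ 2 = sigma2 ^ 2).
  { apply (f_equal Rinv) in hvar. rewrite !Rinv_inv in hvar. lra. }
  split; nra.
Qed.

Lemma weights_proportional_of_const_average (T : Type) (w1 w2 : T -> R) (u v b : R) :
  (forall t, 0 < w1 t) -> (forall t, 0 < w2 t) -> u <> v ->
  (forall t, (w1 t * u + w2 t * v) / (w1 t + w2 t) = b) ->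
  exists K, forall t, w1 t = K * w2 t.
Proof.
  intros hw1 hw2 huv Hb.
  assert (hbal : forall t, w1 t * (u - b) = w2 t * (b - v)).
  { intros t. specialize (Hb t). pose proof (hw1 t). pose proof (hw2 t).
    rewrite <- Hb. field. lra. }
  exists ((b - v) / (u - b)). intros t.
  pose proof (hbal t) as ht. pose proof (hw1 t). pose proof (hw2 t).
  assert (hub : u - b <> 0).
  { intros e. rewrite e, Rmult_0_r in ht. apply huv. nra. }
  apply (Rmult_eq_reg_r (u - b)); [|exact hub].
  rewrite ht. field. exact hub.
Qed.

Lemma mixture_risk_treatment_effect q1 q2 mu1 sigma1 mu2 sigma2 alpha1 alpha2 h c1 c2 c3 x :
  let f1 := normal_pdf mu1 sigma1 x in
  let f2 := normal_pdf mu2 sigma2 x in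
  mixture_risk q1 q2 mu1 sigma1 mu2 sigma2 alpha1 alpha2 h c1 c2 c3 1 x
  - mixture_risk q1 q2 mu1 sigma1 mu2 sigma2 alpha1 alpha2 h c1 c2 c3 0 x
  = (q1 * f1 * (alpha1 h * c1) + q2 * f2 * (alpha2 h * c1)) / (q1 * f1 + q2 * f2).
Proof. unfold mixture_risk, class_risk, base_risk, Rdiv. ring. Qed.

Theorem proposition2
  (c1 c2 c3 : R) (hc1 : c1 < 0)
  (mu1 sigma1 mu2 sigma2 : R) (hs1 : 0 < sigma1) (hs2 : 0 < sigma2)
  (alpha1 alpha2 : nat -> R)
  (halpha1 : forall h, (1 <= h <= 4)%nat -> 0 <= alpha1 h)
  (halpha2 : forall h, (1 <= h <= 4)%nat -> 0 <= alpha2 h)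
  (hsum1 : alpha1 1%nat + alpha1 2%nat + alpha1 3%nat + alpha1 4%nat = 1)
  (hsum2 : alpha2 1%nat + alpha2 2%nat + alpha2 3%nat + alpha2 4%nat = 1) :
  (* (i) *)
  (forall h, (1 <= h <= 4)%nat -> forall a x,
     class_risk alpha1 h c1 c2 c3 a x
       = (alpha1 h * c1) * a + (alpha1 h * c2) * x + alpha1 h * c3 /\
     class_risk alpha2 h c1 c2 c3 a x
       = (alpha2 h * c1) * a + (alpha2 h * c2) * x + alpha2 h * c3) /\
  (* (ii) *)
  (forall (q1 q2 : R) (h : nat),
     0 < q1 < 1 -> 0 < q2 < 1 -> q1 + q2 = 1 ->
     (1 <= h <= 4)%nat ->
     alpha1 h <> alpha2 h ->
     (mu1, sigma1) <> (mu2, sigma2) ->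
     ~ (exists b1 b2 b3 : R, forall a x : R, (a = 0 \/ a = 1) ->
          mixture_risk q1 q2 mu1 sigma1 mu2 sigma2 alpha1 alpha2 h c1 c2 c3 a x
            = b1 * a + b2 * x + b3)).
Proof.
  split.
  { intros h _ a x. unfold class_risk, base_risk. split; ring. }
  intros q1 q2 h [hq1 _] [hq2 _] _ _ halpha hne [b1 [b2 [b3 Haffine]]].
  apply hne.
  destruct (weights_proportional_of_const_average R
              (fun x => q1 * normal_pdf mu1 sigma1 x)
              (fun x => q2 * normal_pdf mu2 sigma2 x)
              (alpha1 h * c1) (alpha2 h * c1) b1) as [K HK].
  - intros x. pose proof (normal_pdf_pos mu1 sigma1 x hs1). nra.
  - intros x. pose proof (normal_pdf_pos mu2 sigma2 x hs2). nra.
  - intros e. apply halpha, (Rmult_eq_reg_r c1); lra.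
  - intros x. rewrite <- (mixture_risk_treatment_effect _ _ _ _ _ _ _ _ _ _ c2 c3).
    rewrite !Haffine by auto. ring.
  - destruct (normal_pdf_proportional mu1 sigma1 mu2 sigma2 (K * q2 / q1) hs1 hs2)
      as [-> ->]; [|reflexivity].
    intros x. apply (Rmult_eq_reg_l q1); [|lra].
    rewrite HK. field. lra.
Qed.
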